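(* The relation $\{(\rho,\sigma,\pi):\rho,\sigma,\pi\text{ are total and }|\rho|+|\sigma|=|\pi|\}$ is $\Pi_3$-definable in $\mathbf Y^*=\langle\mathcal P,\le,[1]+[1]\rangle$.
   Context: $\mathcal P$ is the set of all integer partitions, including the empty partition $\emptyset$; a partition is a nonincreasing finite sequence of positive integers (its parts), and $|\pi|$ is the sum of its parts. A partition is total if it has exactly one part; $\emptyset$ also counts as total. Young's lattice $\mathbf Y=\langle\mathcal P,\le\rangle$ has $(s_1,\dots,s_r)\le(n_1,\dots,n_t)$ iff $r\le t$ and $s_i\le n_i$ for all $i\le r$; $\mathbf Y^*$ is $\mathbf Y$ with a constant symbol for the partition $(1,1)$. A relation is $\Pi_n$-definable if it is defined by a first-order formula in the language $\{\le,(1,1)\}$ in prenex form with $n$ alternating quantifier blocks, the outermost universal, and a quantifier-free matrix. *)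

From mathcomp Require Import all_boot.
Set Implicit Arguments. Unset Strict Implicit. Unset Printing Implicit Defensive.

Definition is_partition (s : seq nat) : bool :=
  sorted geq s && all (fun x => 0 < x) s.

Definition ipartition := {s : seq nat | is_partition s}.

Definition parts (p : ipartition) : seq nat := proj1_sig p.

Definition psize (p : ipartition) : nat := sumn (parts p).

Definition is_total (p : ipartition) : bool := size (parts p) <= 1.

Definition young_le (p q : ipartition) : Prop :=
  size (parts p) <= size (parts q) /\
  forall i, i < size (parts p) -> nth 0 (parts p) i <= nth 0 (parts q) i.

Lemma is_partition_11 : is_partition [:: 1; 1].
Proof. by []. Qed.
Definition part11 : ipartition := exist _ [:: 1; 1] is_partition_11.

Inductive term : Type :=
| TVar : nat -> term
| TC11 : term.

Inductive form : Type :=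
| FLe : term -> term -> form
| FEq : term -> term -> form
| FTrue : form
| FFalse : form
| FNot : form -> form
| FAnd : form -> form -> form
| FOr : form -> form -> form
| FImp : form -> form -> form
| FForall : nat -> form -> form
| FExists : nat -> form -> form.

Definition env := nat -> ipartition.

Definition upd (e : env) (x : nat) (p : ipartition) : env :=
  fun y => if y == x then p else e y.

Definition teval (e : env) (t : term) : ipartition :=
  match t with TVar x => e x | TC11 => part11 end.

Fixpoint sat (e : env) (f : form) : Prop :=
  match f with
  | FLe s t => young_le (teval e s) (teval e t)
  | FEq s t => teval e s = teval e t
  | FTrue => True
  | FFalse => False
  | FNot g => ~ sat e g
  | FAnd g h => sat e g /\ sat e h
  | FOr g h => sat e g \/ sat e h
  | FImp g h => sat e g -> sat e h
  | FForall x g => forall p, sat (upd e x p) g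
  | FExists x g => exists p, sat (upd e x p) g
  end.

Fixpoint qfree (f : form) : bool :=
  match f with
  | FLe _ _ | FEq _ _ | FTrue | FFalse => true
  | FNot g => qfree g
  | FAnd g h | FOr g h | FImp g h => qfree g && qfree h
  | FForall _ _ | FExists _ _ => false
  end.

(* Prenex formulas with n alternating quantifier blocks:
   IsPi n f : outermost block universal; IsSigma n f : outermost existential.
   (Blocks may be empty, so Pi_n includes Pi_m, Sigma_m for m < n.) *)
Inductive IsPi : nat -> form -> Prop :=
| Pi0 f : qfree f -> IsPi 0 f
| PiAll n x f : IsPi n.+1 f -> IsPi n.+1 (FForall x f)
| PiSig n f : IsSigma n f -> IsPi n.+1 f
with IsSigma : nat -> form -> Prop :=
| Sig0 f : qfree f -> IsSigma 0 f
| SigEx n x f : IsSigma n.+1 f -> IsSigma n.+1 (FExists x f)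
| SigPi n f : IsPi n f -> IsSigma n.+1 f.

Definition Pi_definable3 (n : nat) (R : ipartition -> ipartition -> ipartition -> Prop) : Prop :=
  exists f : form, IsPi n f /\
    forall e : env, (R (e 0) (e 1) (e 2) <-> sat e f).

(* The defining
   formula says: for all S and B there are witnesses such that for all w, wB, z,
   rho, sigma and pi are total, and S is not the staircase (|pi|, |pi|-1, ..., 1),
   or B is not the staircase of |sigma|, or an addition gadget holds.
   - Staircases are definable: a partition is a staircase iff it has no
     interval [[y2, S]] which is a three-element chain ("short interval");
     comparing first rows with a total pi pins down [stair |pi|].
   - Over [stair c] and [stair b], the gadget builds the rectangle with b+1
     rows of length |rho|+1 (through (2), (|rho|+1), the column (1^(b+1)) and the
     uniqueness of its corner) and requires it to fit under a cover of
     [stair c] but not under [stair c]; this happens iff |rho| + b = c. *)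

From mathcomp Require Import all_boot zify.
From Stdlib Require Import Classical.
Set Implicit Arguments. Unset Strict Implicit. Unset Printing Implicit Defensive.

Notation "x <<= y" := (young_le x y) (at level 70).

Definition row (p : ipartition) (i : nat) : nat := nth 0 (parts p) i.

Definition noninc (f : nat -> nat) : Prop := forall i j, i <= j -> f j <= f i.

Ltac case_ifs := repeat match goal with
  | |- context[if ?a == ?b then _ else _] => case: (a =P b) => ?
  | |- context[if ?c then _ else _] => case: ifP => ?
  end; try subst.

Lemma geq_trans : transitive geq.
Proof. by move=> a b c /= ? ?; lia. Qed.

Lemma geq_total : total geq.
Proof. by move=> a b /=; lia. Qed.

Lemma row_noninc p : noninc (row p).
Proof.
move=> i j le_ij; rewrite /row; case: p => s /= /andP [sorted_s _].
case: (ltnP j (size s)) => [lt_j|le_j]; last by rewrite nth_default.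
have lt_i : i < size s by lia.
exact: (sorted_leq_nth geq_trans (fun x => leqnn x) 0 sorted_s).
Qed.

Lemma row_beyond p i : size (parts p) <= i -> row p i = 0.
Proof. by move=> le_i; rewrite /row nth_default. Qed.

Lemma row_pos p i : i < size (parts p) -> 0 < row p i.
Proof.
rewrite /row; case: p => s /= part_s lt_i.
by case/andP: part_s => _ /allP; apply; apply: mem_nth.
Qed.

Lemma row_tail p i j : row p i = 0 -> i <= j -> row p j = 0.
Proof. by move=> row_i le_ij; have := row_noninc p le_ij; lia. Qed.

Lemma size_le_rows p q : (forall i, row p i <= row q i) ->
  size (parts p) <= size (parts q).
Proof.
move=> le_pq; rewrite leqNgt; apply/negP => /row_pos pos_p.
by have := le_pq (size (parts q)); rewrite (row_beyond (leqnn _)); lia.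
Qed.

Lemma part_ext p q : (forall i, row p i = row q i) -> p = q.
Proof.
move=> eq_pq; apply: val_inj; apply: (eq_from_nth (x0 := 0)) => [|i _].
  by apply/eqP; rewrite eqn_leq !size_le_rows // => i; rewrite eq_pq.
exact: eq_pq.
Qed.

Lemma youngE p q : p <<= q <-> forall i, row p i <= row q i.
Proof.
split=> [[le_size le_rows] i|le_rows].
  by case: (ltnP i (size (parts p))) => [/le_rows|/row_beyond ->].
by split=> [|i _]; [apply: size_le_rows | apply: le_rows].
Qed.

Lemma young_trans p q r : p <<= q -> q <<= r -> p <<= r.
Proof.
move=> /youngE le_pq /youngE le_qr; apply/youngE => i.
exact: leq_trans (le_pq i) (le_qr i).
Qed.

Lemma young_antisym p q : p <<= q -> q <<= p -> p = q.
Proof.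
move=> /youngE le_pq /youngE le_qp; apply: part_ext => i.
by apply/eqP; rewrite eqn_leq le_pq le_qp.
Qed.

Lemma row_neq p q i : row p i <> row q i -> p <> q.
Proof. by move=> neq_i eq_pq; apply: neq_i; rewrite eq_pq. Qed.

Lemma not_young_row p q : ~ p <<= q -> exists i, row q i < row p i.
Proof.
move=> not_le; apply: NNPP => no_row; apply: not_le; apply/youngE => i.
by rewrite leqNgt; apply/negP => lt_i; apply: no_row; exists i.
Qed.

Lemma young_lt_row p q : p <<= q -> p <> q -> exists i, row p i < row q i.
Proof.
move=> le_pq neq_pq; apply: not_young_row => le_qp.
exact: neq_pq (young_antisym le_pq le_qp).
Qed.

Lemma noninc_step f : (forall i, f i.+1 <= f i) -> noninc f.
Proof.
move=> step i j; elim: j => [|j IH] le_ij; first by have -> : i = 0 by lia.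
case: (ltnP i j.+1) => [lt_ij|le_ji]; last by have -> : i = j.+1 by lia.
by have := step j; have := IH lt_ij; lia.
Qed.

(* The partition whose row lengths are a nonincreasing [f] vanishing from [N] on:
   the positive values of [f] on [0, N), sorted decreasingly (sorting is the
   identity, but makes the partition property evident). *)
Definition of_rows_seq (f : nat -> nat) (N : nat) : seq nat :=
  sort geq [seq x <- map f (iota 0 N) | 0 < x].

Lemma of_rows_partition f N : is_partition (of_rows_seq f N).
Proof.
rewrite /is_partition /of_rows_seq sort_sorted ?all_sort ?filter_all //.
exact: geq_total.
Qed.

Definition of_rows (f : nat -> nat) (N : nat) : ipartition :=
  exist _ (of_rows_seq f N) (of_rows_partition f N).

Lemma sorted_map_iota f m N : noninc f -> sorted geq (map f (iota m N)).
Proof.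
move=> f_noninc; elim: N m => [|N IH] m //=.
rewrite (path_sortedE geq_trans) IH andbT.
apply/allP => x /mapP [k]; rewrite mem_iota => /andP [lt_mk _] ->.
by apply: f_noninc; lia.
Qed.

Lemma nth_filter_pos f N : noninc f -> (forall i, N <= i -> f i = 0) ->
  forall i, nth 0 [seq x <- map f (iota 0 N) | 0 < x] i = f i.
Proof.
elim: N f => [|N IH] f f_noninc f_vanish i; first by rewrite nth_nil f_vanish.
have iota_shift : iota 1 N = [seq 1 + i | i <- iota 0 N] by rewrite -iotaDl.
rewrite /= iota_shift -map_comp.
have shift_noninc : noninc (f \o addn 1) by move=> a b le_ab /=; apply: f_noninc; lia.
have shift_vanish : forall i, N <= i -> (f \o addn 1) i = 0.
  by move=> a le_a /=; apply: f_vanish; lia.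
case: (posnP (f 0)) => [f0|f0_pos]; last by case: i => [|i] //=; rewrite IH.
rewrite IH //=.
by have := f_noninc 0 i (leq0n _); have := f_noninc 0 (1 + i) (leq0n _); lia.
Qed.

Lemma row_of_rows f N : noninc f -> (forall i, N <= i -> f i = 0) ->
  forall i, row (of_rows f N) i = f i.
Proof.
move=> f_noninc f_vanish i; rewrite /row /= /of_rows_seq sorted_sort.
- exact: nth_filter_pos.
- exact: geq_trans.
- by apply: sorted_filter; [exact: geq_trans | exact: sorted_map_iota].
Qed.

(* Nonincreasing functions dominated by the rows of some partition are row
   functions; this is how we lower or raise partitions by a few boxes. *)
Lemma row_of_rows_le f p : noninc f -> (forall i, f i <= row p i) ->
  forall i, row (of_rows f (size (parts p))) i = f i.
Proof.
move=> f_noninc le_f; apply: row_of_rows => // i /row_beyond row_i.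
by have := le_f i; lia.
Qed.

Definition single (k : nat) : ipartition := of_rows (fun i => if i == 0 then k else 0) 1.
Definition column (k : nat) : ipartition := of_rows (fun i => if i < k then 1 else 0) k.
Definition stair (c : nat) : ipartition := of_rows (fun i => c - i) c.
Definition rect (m k : nat) : ipartition := of_rows (fun i => if i < m then k else 0) m.

Lemma row_single k i : row (single k) i = if i == 0 then k else 0.
Proof. by apply: row_of_rows => [|[]] //; apply: noninc_step => -[]. Qed.

Lemma single_total k : row (single k) 1 = 0.
Proof. by rewrite row_single. Qed.

Lemma row_column k i : row (column k) i = if i < k then 1 else 0.
Proof. by apply: row_of_rows => [|j le_kj]; [apply: noninc_step => j|]; case_ifs; lia. Qed.

Lemma row_stair c i : row (stair c) i = c - i.
Proof. by apply: row_of_rows => [|j]; [apply: noninc_step => j|]; lia. Qed.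

Lemma row_rect m k i : row (rect m k) i = if i < m then k else 0.
Proof. by apply: row_of_rows => [|j le_mj]; [apply: noninc_step => j|]; case_ifs; lia. Qed.

Lemma row_11 i : row part11 i = if i < 2 then 1 else 0.
Proof. by case: i => [|[|[]]]. Qed.

Lemma le_11 x : part11 <<= x <-> 0 < row x 1.
Proof.
rewrite youngE; split=> [/(_ 1)|pos_x i]; rewrite row_11 //.
by case_ifs => //; have := @row_noninc x i 1; lia.
Qed.

Lemma is_total_row x : is_total x <-> row x 1 = 0.
Proof.
rewrite /is_total; split=> [/row_beyond //|row_x1].
by rewrite leqNgt; apply/negP => /row_pos; lia.
Qed.

Lemma psize_total x : is_total x -> psize x = row x 0.
Proof. by rewrite /is_total /psize /row; case: x => [[|u [|v s]] ?] //= _; rewrite addn0. Qed.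

Lemma total_single x : row x 1 = 0 -> x = single (row x 0).
Proof.
move=> row_x1; apply: part_ext => -[|i]; rewrite row_single //.
exact: row_tail row_x1 _.
Qed.

Lemma total_le x y : row x 1 = 0 -> x <<= y <-> row x 0 <= row y 0.
Proof.
move=> row_x1; rewrite youngE; split=> [/(_ 0) //|le_x0 [|i] //].
by rewrite (row_tail row_x1).
Qed.

Lemma add_box x y : x <<= y -> x <> y -> exists r w,
  row x r < row y r /\ (forall i, row w i = row x i + (i == r)) /\ w <<= y.
Proof.
move=> le_xy neq_xy; move/youngE: (le_xy) => le_rows.
case: (ex_minnP (young_lt_row le_xy neq_xy)) => r lt_r min_r.
have eq_before i : i < r -> row x i = row y i.
  by move=> lt_ir; apply/eqP; rewrite eqn_leq le_rows leqNgt; apply/negP => /min_r; lia.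
set f := fun i => row x i + (i == r).
have f_noninc : noninc f.
  apply: noninc_step => i; rewrite /f; have := row_noninc x (leqnSn i).
  case: (i.+1 =P r) => [eq_r|]; last by case: (i =P r); lia.
  have := eq_before i (eq_leq eq_r); have := row_noninc y (leqnSn i).
  by rewrite eq_r; case: (i =P r); lia.
have le_f i : f i <= row y i by rewrite /f; have := le_rows i; case: (i =P r) => [->|]; lia.
exists r, (of_rows f (size (parts y))); split=> //.
by split=> [i|]; [|apply/youngE => i]; rewrite row_of_rows_le.
Qed.

Lemma cover_add_box x y : x <<= y -> x <> y ->
  (forall w, x <<= w -> w <<= y -> w = x \/ w = y) ->
  exists r, forall i, row y i = row x i + (i == r).
Proof.
move=> le_xy neq_xy cover; case: (add_box le_xy neq_xy) => r [w [_ [row_w le_wy]]].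
have le_xw : x <<= w by apply/youngE => i; rewrite row_w; lia.
case: (cover w le_xw le_wy) => eq_w; last by exists r => i; rewrite -row_w eq_w.
by have := row_w r; rewrite eq_w eqxx; lia.
Qed.

Definition set_row (x : ipartition) (i v : nat) : ipartition :=
  of_rows (fun k => if k == i then v else row x k) (size (parts x)).

Section SetRow.
Variables (x : ipartition) (i v : nat).
Hypothesis v_between : row x i.+1 <= v <= row x i.

Lemma row_set_row k : row (set_row x i v) k = if k == i then v else row x k.
Proof.
move/andP: v_between => [ge_v le_v]; apply: row_of_rows_le => [|{}k]; last by case_ifs.
apply: noninc_step => {}k; have := row_noninc x (leqnSn k).
by have := @row_noninc x k.+1 i; case_ifs; lia.
Qed.

Lemma set_row_on : row (set_row x i v) i = v.
Proof. by rewrite row_set_row eqxx. Qed.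

Lemma set_row_off k : k != i -> row (set_row x i v) k = row x k.
Proof. by rewrite row_set_row => /negPf ->. Qed.

End SetRow.

Lemma level_end (f : nat -> nat) i n : noninc f -> f n < f i ->
  exists j, [/\ i <= j < n, f j = f i & f j.+1 < f j].
Proof.
move=> f_noninc; elim: n => [|n IH] lt_n.
  by have := f_noninc 0 i (leq0n i); lia.
case: (ltnP (f n) (f i)) => [/IH [j [/andP [le_ij lt_jn] fj fj1]]|ge_n].
  by exists j; split=> //; lia.
have le_in : i <= n by rewrite leqNgt; apply/negP => lt_ni; have := f_noninc _ _ lt_ni; lia.
by exists n; have := f_noninc _ _ le_in; split=> //; lia.
Qed.

Lemma interval_eq (y w S x : ipartition) (D : pred nat) : y <<= w -> w <<= S ->
  (forall k, ~~ D k -> row y k = row S k) -> (forall k, ~~ D k -> row x k = row S k) ->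
  (forall k, D k -> row w k = row x k) -> w = x.
Proof.
move=> /youngE le_yw /youngE le_wS y_off x_off w_on; apply: part_ext => k.
case: (boolP (D k)) => [/w_on //|off_k].
by rewrite x_off //; have := y_off k off_k; have := le_yw k; have := le_wS k; lia.
Qed.

(* [short_interval S y1 y2]: the interval [[y2, S]] of Young's lattice is the
   three-element chain [y2 < y1 < S]; [short_interval_at] is the instance at [w]
   of the universal statement, as it appears in the defining formula. *)
Definition short_interval_at (S y1 y2 w : ipartition) : Prop :=
  y2 <<= y1 /\ y2 <> y1 /\ y1 <<= S /\ y1 <> S /\
  ~ (y2 <<= w /\ w <<= S /\ w <> y2 /\ w <> S /\ w <> y1).

Definition short_interval (S y1 y2 : ipartition) : Prop :=
  forall w, short_interval_at S y1 y2 w.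

Lemma short_intervalP (S y1 y2 : ipartition) :
  y2 <<= y1 -> y2 <> y1 -> y1 <<= S -> y1 <> S ->
  (forall w, y2 <<= w -> w <<= S -> [\/ w = y2, w = y1 | w = S]) ->
  short_interval S y1 y2.
Proof.
move=> le_21 ne_21 le_1S ne_1S between w; do 4 (split=> //).
by move=> [le_2w [le_wS [ne_2 [ne_S ne_1]]]]; case: (between w le_2w le_wS).
Qed.

(* Two boxes at the end of row [i] form a short interval when row [i+1] is at
   least two boxes shorter. *)
Lemma short_interval_row S i : row S i.+1 < (row S i).-1 ->
  exists y1 y2, short_interval S y1 y2.
Proof.
set m := row S i => gap.
have valid1 : row S i.+1 <= m.-1 <= m by apply/andP; lia.
have valid2 : row S i.+1 <= m.-2 <= m by apply/andP; lia.
exists (set_row S i m.-1), (set_row S i m.-2); apply: short_intervalP.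
- by apply/youngE => k; rewrite !row_set_row //; case_ifs; lia.
- by apply: (@row_neq _ _ i); rewrite !set_row_on //; lia.
- by apply/youngE => k; rewrite row_set_row //; case_ifs; lia.
- by apply: (@row_neq _ _ i); rewrite set_row_on //; lia.
move=> w le_2w le_wS; have off := set_row_off valid2.
have := interval_eq (D := pred1 i) le_2w le_wS off.
move/youngE: le_2w => /(_ i); move/youngE: le_wS => /(_ i).
rewrite set_row_on // => le_w ge_w eq_w.
have [lt_w|ge_w1] := ltnP (row w i) m.-1.
  by constructor 1; apply: eq_w off _ => k /eqP ->; rewrite set_row_on //; lia.
have [lt_w|ge_wm] := ltnP (row w i) m.
  by constructor 2; apply: eq_w (set_row_off valid1) _ => k /eqP ->; rewrite set_row_on //; lia.
by constructor 3; apply: eq_w => // k /eqP ->; rewrite /m in ge_wm le_w *; lia.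
Qed.

(* The last box of a block of two equal rows [p, p+1], followed by the box
   before it in row [p], form a short interval. *)
Lemma short_interval_block S p : 0 < row S p -> row S p.+1 = row S p ->
  row S p.+2 < row S p -> exists y1 y2, short_interval S y1 y2.
Proof.
set m := row S p => pos_m eq_p1 lt_p2.
have valid1 : row S p.+2 <= m.-1 <= row S p.+1 by apply/andP; lia.
set y1 := set_row S p.+1 m.-1.
have row1 k : row y1 k = if k == p.+1 then m.-1 else row S k by apply: row_set_row.
have valid2 : row y1 p.+1 <= m.-1 <= row y1 p by apply/andP; rewrite !row1; case_ifs; lia.
set y2 := set_row y1 p m.-1.
have row2 k : row y2 k = if k == p then m.-1 else row y1 k by apply: row_set_row.
exists y1, y2; apply: short_intervalP.
- by apply/youngE => k; rewrite row2; case_ifs; lia.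
- by apply: (@row_neq _ _ p); rewrite row2 !row1; case_ifs; lia.
- by apply/youngE => k; rewrite row1; case_ifs; lia.
- by apply: (@row_neq _ _ p.+1); rewrite row1; case_ifs; lia.
move=> w le_2w le_wS; set D := [pred k | (k == p) || (k == p.+1)].
have y2_off k : ~~ D k -> row y2 k = row S k.
  by rewrite row2 row1 /D /= => /norP [/negPf -> /negPf ->].
have y2_p : row y2 p = m.-1 by rewrite row2 eqxx.
have y2_p1 : row y2 p.+1 = m.-1 by rewrite row2 row1; case_ifs; lia.
have := interval_eq le_2w le_wS y2_off.
move/youngE: le_2w => le_2w; move/youngE: le_wS => le_wS.
have := row_noninc w (leqnSn p); have := le_2w p; have := le_2w p.+1.
have := le_wS p; have := le_wS p.+1; rewrite y2_p y2_p1 eq_p1.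
move=> le1 le0 ge1 ge0 noninc_w eq_w.
have [w1_top|w1_low] := ltnP m.-1 (row w p.+1).
  by constructor 3; apply: eq_w => // k /orP [] /eqP ->; lia.
have [w0_top|w0_low] := ltnP m.-1 (row w p).
  constructor 2; apply: eq_w => [k|k /orP [] /eqP ->]; rewrite row1.
  - by move=> /negPf; rewrite /D /= => /norP [_ /negPf ->].
  - by case_ifs; lia.
  - by rewrite eqxx; lia.
by constructor 1; apply: eq_w y2_off _ => k /orP [] /eqP ->; lia.
Qed.

Lemma no_short_interval_step S i : (forall y1 y2, ~ short_interval S y1 y2) ->
  0 < row S i -> row S i.+1 = (row S i).-1.
Proof.
move=> no_short pos_i; have le_next := row_noninc S (leqnSn i).
have [gap|] := ltnP (row S i.+1) (row S i).-1.
  by case: (short_interval_row gap) => y1 [y2 /no_short].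
rewrite leq_eqVlt => /orP [/eqP <- //|next_big].
have eq_next : row S i.+1 = row S i by lia.
have ends : row S (size (parts S)) < row S i.+1 by rewrite row_beyond //; lia.
case: (level_end (row_noninc S) ends) => j [/andP [lt_ij _] row_j drop_j].
have row_pj : row S j.-1 = row S i.
  by have := @row_noninc S i j.-1; have := @row_noninc S j.-1 j; lia.
have := @short_interval_block S j.-1; rewrite !prednK; try lia.
by case=> [||| y1 [y2 /no_short]] //; lia.
Qed.

Lemma no_short_interval_stair S : (forall y1 y2, ~ short_interval S y1 y2) ->
  S = stair (row S 0).
Proof.
move=> no_short; apply: part_ext; elim=> [|i IH]; rewrite row_stair ?subn0 //.
case: (posnP (row S i)) => [row_i|pos_i]; last first.
  by rewrite (no_short_interval_step no_short pos_i) IH row_stair; lia.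
by rewrite (row_tail row_i (leqnSn i)); move: IH; rewrite row_stair; lia.
Qed.

(* Both steps of a short interval are covers, hence single boxes. *)
Lemma short_interval_boxes S y1 y2 : short_interval S y1 y2 ->
  (exists r, forall i, row S i = row y1 i + (i == r)) /\
  (exists r, forall i, row y1 i = row y2 i + (i == r)).
Proof.
move=> short; have [le_21 [ne_21 [le_1S [ne_1S _]]]] := short S.
have middle w : y2 <<= w -> w <<= S -> w <> y2 -> w <> S -> w = y1.
  move=> le_2w le_wS ne_2 ne_S; apply: NNPP => ne_1; have [_ [_ [_ [_ no_w]]]] := short w.
  exact: no_w (conj le_2w (conj le_wS (conj ne_2 (conj ne_S ne_1)))).
split; apply: cover_add_box => // w le_lw le_wu.
- have ne_2 : w <> y2 by move=> eq_w; apply: ne_21; apply: young_antisym => //; rewrite -eq_w.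
  case: (classic (w = S)) => [|ne_S]; [right | left; apply: middle] => //.
  exact: young_trans le_21 le_lw.
- have ne_S : w <> S by move=> eq_w; apply: ne_1S; apply: young_antisym => //; rewrite -eq_w.
  case: (classic (w = y2)) => [|ne_2]; [left | right; apply: middle] => //.
  exact: young_trans le_wu le_1S.
Qed.

(* Staircases have no short intervals: below a staircase, two boxes removed one
   after the other are never adjacent, so they can be removed in either order. *)
Lemma stair_no_short_interval c y1 y2 : ~ short_interval (stair c) y1 y2.
Proof.
move=> short; have [[r row_S] [r' row_1]] := short_interval_boxes short.
have row2 i : row (stair c) i = row y2 i + (i == r) + (i == r') by rewrite row_S row_1; lia.
have ne_rr' : r != r'.
  apply/eqP => eq_r; have := row2 r; have := row2 r.+1; have := row_noninc y2 (leqnSn r).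
  by rewrite !row_stair -eq_r eqxx; case_ifs; lia.
have lt_r'c : r' < c by have := row2 r'; rewrite row_stair eqxx; lia.
have valid : row (stair c) r'.+1 <= (c - r').-1 <= row (stair c) r' by rewrite !row_stair; lia.
have [_ [_ [_ [_ []]]]] := short (set_row (stair c) r' (c - r').-1).
have row3 := row_set_row valid; split; [|split; [|split; [|split]]].
- by apply/youngE => i; have := row2 i; rewrite row3 !row_stair; case_ifs; lia.
- by apply/youngE => i; rewrite row3 !row_stair; case_ifs; lia.
- apply: (@row_neq _ _ r); have := row2 r; rewrite row3 !row_stair.
  by move: ne_rr'; case_ifs; lia.
- by apply: (@row_neq _ _ r'); rewrite row3 !row_stair eqxx; lia.
- apply: (@row_neq _ _ r'); have := row2 r'; rewrite row3 row_1 !row_stair.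
  by move: ne_rr'; case_ifs; lia.
Qed.

Definition total_def (x : ipartition) : Prop := ~ part11 <<= x.

Lemma total_defE x : total_def x <-> row x 1 = 0.
Proof. by rewrite /total_def le_11; lia. Qed.

(* [stair_fails pi S y1 y2 t w] witnesses that [S] is not the staircase whose
   first row is [|pi|]: either [pi] is not below [S], or the first row of [S] is
   longer than [pi] (witness [t]), or [S] has a short interval [[y2, S]]. *)
Definition stair_fails (pi S y1 y2 t w : ipartition) : Prop :=
  ~ pi <<= S \/ ((total_def t /\ t <<= S /\ ~ t <<= pi) \/ short_interval_at S y1 y2 w).

Lemma stair_fails_stair pi y1 y2 t : row pi 1 = 0 ->
  exists w, ~ stair_fails pi (stair (row pi 0)) y1 y2 t w.
Proof.
move=> total_pi; have: ~ short_interval (stair (row pi 0)) y1 y2 by apply: stair_no_short_interval.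
move=> /not_all_ex_not [w not_short]; exists w.
case=> [not_le|[[/total_defE total_t [le_tS not_le]]|/not_short []]]; apply: not_le.
  by apply/(total_le _ total_pi); rewrite row_stair subn0.
by apply/(total_le _ total_t); move/(total_le _ total_t): le_tS; rewrite row_stair subn0.
Qed.

Lemma stair_fails_other pi S : row pi 1 = 0 ->
  S = stair (row pi 0) \/ exists y1 y2 t, forall w, stair_fails pi S y1 y2 t w.
Proof.
move=> total_pi; case: (classic (pi <<= S)) => [le_pS|]; last first.
  by right; exists pi, pi, pi => w; left.
case: (classic (exists t, total_def t /\ t <<= S /\ ~ t <<= pi)) => [[t long]|no_long].
  by right; exists pi, pi, t => w; right; left.
case: (classic (exists y1 y2, short_interval S y1 y2)) => [[y1 [y2 short]]|no_short].
  by right; exists y1, y2, pi => w; right; right.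
have stair_S : S = stair (row S 0).
  by apply: no_short_interval_stair => y1 y2 short; apply: no_short; exists y1, y2.
left; rewrite stair_S; congr stair; apply/eqP.
rewrite eqn_leq (proj1 (total_le _ total_pi) le_pS) andbT.
have: single (row S 0) <<= pi.
  apply: NNPP => not_le; apply: no_long; exists (single (row S 0)).
  split; first by apply/total_defE; apply: single_total.
  by split=> //; apply/(total_le _ (single_total _)); rewrite row_single.
by move/(total_le _ (single_total _)); rewrite row_single.
Qed.

(* [T] is the total partition [(2)]: total, not below [(1,1)], and every
   partition below it other than itself is below [(1,1)]. *)
Definition two_at (T z : ipartition) : Prop :=
  total_def T /\ ~ T <<= part11 /\ (z <<= T -> z <<= part11 \/ z = T).

(* [t] is the total partition [(|r| + 1)]: total, strictly above [r], and all
   partitions strictly below [t] are below [r]. *)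
Definition succ_at (r t z : ipartition) : Prop :=
  total_def t /\ r <<= t /\ r <> t /\ (z <<= t /\ z <> t -> z <<= r).

(* [R] has a single removable box: all partitions strictly below [R] lie below
   one [yR < R]. *)
Definition one_corner_at (R yR z : ipartition) : Prop :=
  yR <<= R /\ yR <> R /\ (z <<= R -> z = R \/ z <<= yR).

(* The first row of [R] is the total partition [t]. *)
Definition first_row_at (t R z : ipartition) : Prop :=
  t <<= R /\ (total_def z /\ z <<= R -> z <<= t).

(* [K] is the first column of [R], given [T = (2)]: columns are the partitions
   not above [T]. *)
Definition first_column_at (T K R z : ipartition) : Prop :=
  ~ T <<= K /\ K <<= R /\ (~ T <<= z /\ z <<= R -> z <<= K).

Definition minimal_not_below_at (K B z : ipartition) : Prop :=
  ~ K <<= B /\ (z <<= K /\ z <> K -> z <<= B).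

Definition over_at (R S J z : ipartition) : Prop :=
  ~ R <<= S /\ R <<= J /\ S <<= J /\ (S <<= z /\ z <<= J -> z = S \/ z = J).

Lemma two_sound T : (forall z, two_at T z) -> T = single 2.
Proof.
move=> two; have [/total_defE total_T [not_le11 _]] := two T.
have ge2 : 1 < row T 0.
  rewrite ltnNge; apply/negP => le1; apply: not_le11; apply/youngE => -[|i].
    by rewrite row_11.
  by rewrite (row_tail total_T).
have [_ [_ below]] := two (single 2).
have le_2T : single 2 <<= T by apply/(total_le _ (single_total 2)); rewrite row_single.
by case: (below le_2T) => [/youngE /(_ 0)|<- //]; rewrite row_single row_11.
Qed.

Lemma not_above_two u : ~ single 2 <<= u <-> row u 0 <= 1.
Proof. by rewrite (total_le _ (single_total 2)) row_single /=; lia. Qed.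

Lemma succ_sound r t : row r 1 = 0 -> (forall z, succ_at r t z) -> t = single (row r 0).+1.
Proof.
move=> total_r succ; have [/total_defE total_t [le_rt [ne_rt _]]] := succ t.
have lt_rt : row r 0 < row t 0.
  move/(total_le _ total_r): le_rt; rewrite leq_eqVlt => /orP [/eqP eq_0|//].
  by case: ne_rt; rewrite (total_single total_r) (total_single total_t) eq_0.
have [_ [_ [_ below_t]]] := succ (single (row r 0).+1).
rewrite (total_single total_t); congr single; apply/eqP.
rewrite eqn_leq lt_rt andbT leqNgt; apply/negP => lt_t.
have : single (row r 0).+1 <<= r.
  apply: below_t; split.
  - by apply/(total_le _ (single_total _)); rewrite row_single /=; lia.
  - by apply: (@row_neq _ _ 0); rewrite row_single /=; lia.
by move/(total_le _ (single_total _)); rewrite row_single /=; lia.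
Qed.

Lemma minimal_not_below_column K b : row K 0 <= 1 ->
  (forall z, minimal_not_below_at K (stair b) z) -> K = column b.+1.
Proof.
move=> col minimal; have [not_le _] := minimal K.
have row_le1 i : row K i <= 1 by have := @row_noninc K 0 i (leq0n i); lia.
have pos_b : 0 < row K b.
  rewrite lt0n; apply/negP => /eqP row_b; apply: not_le; apply/youngE => i.
  rewrite row_stair; case: (ltnP i b) => [lt_ib|le_bi]; first by have := row_le1 i; lia.
  by rewrite (row_tail row_b le_bi).
have row_b1 : row K b.+1 = 0.
  apply/eqP; rewrite -leqn0 leqNgt; apply/negP => pos_b1.
  have [_ below_K] := minimal (column b.+1).
  have : column b.+1 <<= stair b.
    apply: below_K; split.
    - apply/youngE => i; rewrite row_column; case: ifP => // lt_i.
      by have := @row_noninc K i b.+1; lia.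
    - by apply: (@row_neq _ _ b.+1); rewrite row_column ltnn; lia.
  by move/youngE/(_ b); rewrite row_column row_stair ltnSn subnn.
apply: part_ext => i; rewrite row_column; case: ltnP => [lt_i|le_i].
- by have := @row_noninc K i b; have := row_le1 i; lia.
- exact: row_tail row_b1 le_i.
Qed.

Lemma first_column_height R b :
  (forall z, first_column_at (single 2) (column b.+1) R z) -> 0 < row R b /\ row R b.+1 = 0.
Proof.
move=> first_col; have [_ [le_KR below_R]] := first_col (column b.+2).
split; first by move/youngE: le_KR => /(_ b); rewrite row_column ltnSn.
apply/eqP; rewrite -leqn0 leqNgt; apply/negP => pos_b1.
have : column b.+2 <<= column b.+1.
  apply: below_R; split; first by apply/not_above_two; rewrite row_column.
  apply/youngE => i; rewrite row_column; case: ifP => // lt_i.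
  by have := @row_noninc R i b.+1; lia.
by move/youngE/(_ b.+1); rewrite !row_column ltnn ltnSn.
Qed.

Lemma first_row_sound t R : row t 1 = 0 -> (forall z, first_row_at t R z) ->
  row R 0 = row t 0.
Proof.
move=> total_t first_row; have [le_tR below_t] := first_row (single (row R 0)).
apply/eqP; rewrite eqn_leq (proj1 (total_le _ total_t) le_tR) andbT.
have : single (row R 0) <<= t.
  apply: below_t; split; first by apply/total_defE; apply: single_total.
  by apply/(total_le _ (single_total _)); rewrite row_single.
by move/(total_le _ (single_total _)); rewrite row_single.
Qed.

(* Removing a box from either of two distinct corners of [R] gives partitions
   whose join is [R]; so [R] has a single corner. *)
Lemma one_corner_unique R yR k1 k2 : (forall z, one_corner_at R yR z) ->
  row R k1.+1 < row R k1 -> row R k2.+1 < row R k2 -> k1 = k2.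
Proof.
move=> one_corner corner1 corner2; apply: NNPP => /eqP ne_k.
have [le_yR [ne_yR _]] := one_corner R.
have lower k : row R k.+1 < row R k -> forall i, i != k -> row R i <= row yR i.
  move=> corner i ne_i; have valid : row R k.+1 <= (row R k).-1 <= row R k by apply/andP; lia.
  have [_ [_ below_R]] := one_corner (set_row R k (row R k).-1).
  have le_zR : set_row R k (row R k).-1 <<= R.
    by apply/youngE => j; rewrite row_set_row //; case_ifs; lia.
  case: (below_R le_zR) => [eq_z|/youngE /(_ i)]; last by rewrite set_row_off.
  by have := set_row_on valid; rewrite eq_z; lia.
apply: ne_yR; apply: young_antisym le_yR _; apply/youngE => i.
by case: (i =P k1) => [->|/eqP ne_i]; [apply: (lower k2) | apply: (lower k1)].
Qed.

Lemma one_corner_rect R yR b : (forall z, one_corner_at R yR z) ->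
  0 < row R b -> row R b.+1 = 0 -> R = rect b.+1 (row R 0).
Proof.
move=> one_corner pos_b row_b1; have corner_b : row R b.+1 < row R b by lia.
have eq_b : row R b = row R 0.
  apply/eqP; rewrite eqn_leq (row_noninc R (leq0n b)) /= leqNgt; apply/negP => lt_b.
  case: (level_end (row_noninc R) lt_b) => j [/andP [_ lt_jb] _ corner_j].
  by have := one_corner_unique one_corner corner_j corner_b; lia.
apply: part_ext => i; rewrite row_rect; case: ltnP => [lt_ib|le_bi].
  by have := @row_noninc R 0 i (leq0n i); have := @row_noninc R i b; lia.
exact: row_tail row_b1 le_bi.
Qed.

(* A rectangle of [b + 1] rows of length [a + 1] lies below a cover of
   [stair c] without lying below [stair c] only if [a + b = c]: the added box
   must be at the end of the rectangle's last row. *)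
Lemma over_rect_sound a b c J : (forall z, over_at (rect b.+1 a.+1) (stair c) J z) ->
  a + b = c.
Proof.
move=> over; have [not_le [le_RJ [le_SJ _]]] := over J.
have ne_SJ : stair c <> J by move=> eq_J; apply: not_le; rewrite eq_J.
have cover w : stair c <<= w -> w <<= J -> w = stair c \/ w = J.
  by move=> le_Sw le_wJ; have [_ [_ [_]]] := over w; apply.
case: (cover_add_box le_SJ ne_SJ cover) => r row_J.
case: (not_young_row not_le) => i; move/youngE: le_RJ => le_RJ.
have := le_RJ i; have := le_RJ b; have := le_RJ b.-1.
rewrite !row_J !row_rect !row_stair; case_ifs; lia.
Qed.

Lemma two_complete z : two_at (single 2) z.
Proof.
split; first by apply/total_defE; apply: single_total.
split; first by move/youngE/(_ 0); rewrite row_single row_11.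
move/youngE => le_z; have total_z : row z 1 = 0 by have := le_z 1; rewrite row_single /=; lia.
have := le_z 0; rewrite row_single /= leq_eqVlt => /orP [/eqP eq_z0|lt_z0].
  by right; rewrite (total_single total_z) eq_z0.
by left; apply/youngE => -[|i]; rewrite row_11 /=; [lia | rewrite (row_tail total_z)].
Qed.

Lemma succ_complete a z : succ_at (single a) (single a.+1) z.
Proof.
have total_le' k := total_le _ (single_total k).
split; first by apply/total_defE; apply: single_total.
split; first by apply/total_le'; rewrite !row_single /=.
split; first by apply: (@row_neq _ _ 0); rewrite !row_single /=; lia.
move=> [/youngE le_z ne_z].
have total_z : row z 1 = 0 by have := le_z 1; rewrite row_single /=; lia.
apply/(total_le _ total_z); rewrite row_single /=; have := le_z 0; rewrite row_single /=.
rewrite leq_eqVlt => /orP [/eqP eq_z0|] //.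
by case: ne_z; rewrite (total_single total_z) eq_z0.
Qed.

Lemma one_corner_complete m k : 0 < m -> 0 < k ->
  exists yR, forall z, one_corner_at (rect m k) yR z.
Proof.
move=> pos_m pos_k; have valid : row (rect m k) m.-1.+1 <= k.-1 <= row (rect m k) m.-1.
  by rewrite !row_rect; case_ifs; lia.
have row_y := row_set_row valid; exists (set_row (rect m k) m.-1 k.-1) => z.
split; first by apply/youngE => i; rewrite row_y row_rect; case_ifs; lia.
split; first by apply: (@row_neq _ _ m.-1); rewrite row_y eqxx row_rect; case_ifs; lia.
move/youngE => le_z; have [full|low] := eqVneq (row z m.-1) k.
- left; apply: part_ext => i; have := le_z i; rewrite row_rect.
  case: ltnP => [lt_im|]; last lia.
  by have := @row_noninc z i m.-1; lia.
- right; apply/youngE => i; have := le_z i; have := le_z m.-1; move: low.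
  by rewrite row_y !row_rect; case_ifs; lia.
Qed.

Lemma first_row_complete m k z : 0 < m -> first_row_at (single k) (rect m k) z.
Proof.
move=> pos_m; split.
  by apply/(total_le _ (single_total k)); rewrite row_single row_rect pos_m.
move=> [/total_defE total_z /youngE /(_ 0)]; rewrite row_rect pos_m => le_z0.
by apply/(total_le _ total_z); rewrite row_single.
Qed.

Lemma first_column_complete m k z : 0 < k -> first_column_at (single 2) (column m) (rect m k) z.
Proof.
move=> pos_k; split; first by apply/not_above_two; rewrite row_column; case_ifs.
split; first by apply/youngE => i; rewrite row_column row_rect; case_ifs; lia.
move=> [/not_above_two le_z0 /youngE le_z]; apply/youngE => i; have := le_z i.
by have := @row_noninc z 0 i (leq0n i); rewrite row_column row_rect; case_ifs; lia.
Qed.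

Lemma minimal_not_below_complete b z : minimal_not_below_at (column b.+1) (stair b) z.
Proof.
split; first by move/youngE/(_ b); rewrite row_column row_stair ltnSn subnn.
move=> [/youngE le_z ne_z]; have [low|full] := ltnP (row z b) 1; last first.
  case: ne_z; apply: part_ext => i; have := le_z i; rewrite row_column.
  case: ltnP => [lt_ib|]; last lia.
  by have := @row_noninc z i b; lia.
apply/youngE => i; rewrite row_stair.
case: (ltnP i b) => [lt_ib|le_bi]; first by have := le_z i; rewrite row_column; case_ifs; lia.
by have := row_noninc z le_bi; lia.
Qed.

(* The cover of [stair (a + b)] adding a box to row [b]. *)
Lemma over_complete a b : exists J, forall z, over_at (rect b.+1 a.+1) (stair (a + b)) J z.
Proof.
set c := a + b; set f := fun i => c - i + (i == b).
have row_J : forall i, row (of_rows f c.+1) i = f i.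
  apply: row_of_rows => [|i le_ci]; rewrite /f; last by case_ifs; lia.
  by apply: noninc_step => i; case_ifs; lia.
exists (of_rows f c.+1) => z; rewrite /over_at /f in row_J *.
split; first by move/youngE/(_ b); rewrite row_rect row_stair ltnSn; lia.
split; first by apply/youngE => i; rewrite row_J row_rect; case_ifs; lia.
split; first by apply/youngE => i; rewrite row_J row_stair; case_ifs; lia.
move=> [/youngE le_Sz /youngE le_zJ]; have := le_Sz b; have := le_zJ b.
rewrite row_J row_stair eqxx => le_b ge_b.
have off i : i != b -> row z i = c - i.
  by move=> /negPf ne_i; have := le_Sz i; have := le_zJ i; rewrite row_J row_stair ne_i; lia.
have [eq_b|ne_b] := eqVneq (row z b) (c - b).
- left; apply: part_ext => i; rewrite row_stair; case: (eqVneq i b) => [->|/off] //.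
- right; apply: part_ext => i; rewrite row_J; case: (eqVneq i b) => [->|ne_i]; first lia.
  by rewrite off //= addn0.
Qed.

(* The addition gadget: for [S = stair c] and [B = stair b], the witnesses exist
   iff [|r| + b = c], namely [T = (2)], [t = (|r|+1)], [R = ((|r|+1)^(b+1))],
   [K = (1^(b+1))], [yR] below [R] and [J] covering [S]. *)
Definition sum_at (r S B T t R yR K J z : ipartition) : Prop :=
  two_at T z /\ succ_at r t z /\ one_corner_at R yR z /\ first_row_at t R z /\
  first_column_at T K R z /\ minimal_not_below_at K B z /\ over_at R S J z.

Lemma sum_sound r b c T t R yR K J : row r 1 = 0 ->
  (forall z, sum_at r (stair c) (stair b) T t R yR K J z) -> row r 0 + b = c.
Proof.
move=> total_r sum.
have two z : two_at T z by case: (sum z).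
have succ z : succ_at r t z by case: (sum z) => _ [].
have corner z : one_corner_at R yR z by case: (sum z) => _ [_ []].
have first_row z : first_row_at t R z by case: (sum z) => _ [_ [_ []]].
have first_col z : first_column_at T K R z by case: (sum z) => _ [_ [_ [_ []]]].
have minimal z : minimal_not_below_at K (stair b) z by case: (sum z) => _ [_ [_ [_ [_ []]]]].
have over z : over_at R (stair c) J z by case: (sum z) => _ [_ [_ [_ [_ [_ ?]]]]].
have eq_T := two_sound two; have eq_t := succ_sound total_r succ; subst T t.
have eq_K : K = column b.+1.
  by apply: minimal_not_below_column minimal; have [/not_above_two] := first_col K.
subst K; have [pos_b row_b1] := first_column_height first_col.
have row_R0 : row R 0 = (row r 0).+1.
  by rewrite (first_row_sound (single_total _) first_row) row_single.
rewrite (one_corner_rect corner pos_b row_b1) row_R0 in over.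
exact: over_rect_sound over.
Qed.

Lemma sum_complete a b : exists T t R yR K J,
  forall z, sum_at (single a) (stair (a + b)) (stair b) T t R yR K J z.
Proof.
have [yR one_corner] := one_corner_complete (ltn0Sn b) (ltn0Sn a).
have [J over] := over_complete a b.
exists (single 2), (single a.+1), (rect b.+1 a.+1), yR, (column b.+1), J => z.
exact: conj (two_complete z) (conj (succ_complete a z) (conj (one_corner z)
  (conj (first_row_complete _ _ (ltn0Sn b)) (conj (first_column_complete _ _ (ltn0Sn a))
  (conj (minimal_not_below_complete b z) (over z)))))).
Qed.

Definition le_f (x y : nat) : form := FLe (TVar x) (TVar y).
Definition eq_f (x y : nat) : form := FEq (TVar x) (TVar y).
Definition ne_f (x y : nat) : form := FNot (eq_f x y).
Definition total_f (x : nat) : form := FNot (FLe TC11 (TVar x)).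

Definition short_interval_f (S y1 y2 w : nat) : form :=
  FAnd (le_f y2 y1) (FAnd (ne_f y2 y1) (FAnd (le_f y1 S) (FAnd (ne_f y1 S)
  (FNot (FAnd (le_f y2 w) (FAnd (le_f w S) (FAnd (ne_f w y2) (FAnd (ne_f w S) (ne_f w y1))))))))).

Definition stair_fails_f (pi S y1 y2 t w : nat) : form :=
  FOr (FNot (le_f pi S))
    (FOr (FAnd (total_f t) (FAnd (le_f t S) (FNot (le_f t pi)))) (short_interval_f S y1 y2 w)).

Definition two_f (T z : nat) : form :=
  FAnd (total_f T) (FAnd (FNot (FLe (TVar T) TC11))
    (FImp (le_f z T) (FOr (FLe (TVar z) TC11) (eq_f z T)))).

Definition succ_f (r t z : nat) : form :=
  FAnd (total_f t) (FAnd (le_f r t) (FAnd (ne_f r t)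
    (FImp (FAnd (le_f z t) (ne_f z t)) (le_f z r)))).

Definition one_corner_f (R yR z : nat) : form :=
  FAnd (le_f yR R) (FAnd (ne_f yR R) (FImp (le_f z R) (FOr (eq_f z R) (le_f z yR)))).

Definition first_row_f (t R z : nat) : form :=
  FAnd (le_f t R) (FImp (FAnd (total_f z) (le_f z R)) (le_f z t)).

Definition first_column_f (T K R z : nat) : form :=
  FAnd (FNot (le_f T K)) (FAnd (le_f K R)
    (FImp (FAnd (FNot (le_f T z)) (le_f z R)) (le_f z K))).

Definition minimal_not_below_f (K B z : nat) : form :=
  FAnd (FNot (le_f K B)) (FImp (FAnd (le_f z K) (ne_f z K)) (le_f z B)).

Definition over_f (R S J z : nat) : form :=
  FAnd (FNot (le_f R S)) (FAnd (le_f R J) (FAnd (le_f S J)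
    (FImp (FAnd (le_f S z) (le_f z J)) (FOr (eq_f z S) (eq_f z J))))).

Definition sum_f (r S B T t R yR K J z : nat) : form :=
  FAnd (two_f T z) (FAnd (succ_f r t z) (FAnd (one_corner_f R yR z)
  (FAnd (first_row_f t R z) (FAnd (first_column_f T K R z)
  (FAnd (minimal_not_below_f K B z) (over_f R S J z)))))).

(* The defining formula, with [rho, sigma, pi] the variables [0, 1, 2]:
   for all [S, B] (3, 4) there are witnesses (5-16) such that for all [w, wB, z]
   (17-19), the three arguments are total and either [S] is not [stair |pi|],
   or [B] is not [stair |sigma|], or the addition gadget holds. *)
Definition sum_formula : form :=
  FForall 3 (FForall 4 (FExists 5 (FExists 6 (FExists 7 (FExists 8 (FExists 9
  (FExists 10 (FExists 11 (FExists 12 (FExists 13 (FExists 14 (FExists 15 (FExists 16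
  (FForall 17 (FForall 18 (FForall 19
    (FAnd (total_f 0) (FAnd (total_f 1) (FAnd (total_f 2)
      (FOr (stair_fails_f 2 3 5 6 7 17) (FOr (stair_fails_f 1 4 8 9 10 18)
        (sum_f 0 3 4 11 12 13 14 15 16 19)))))))))))))))))))))).

Lemma sum_formula_Pi3 : IsPi 3 sum_formula.
Proof.
do 2 apply: PiAll; apply: PiSig; do 12 apply: SigEx; apply: SigPi.
by do 3 apply: PiAll; apply: PiSig; apply: Sig0.
Qed.

Definition sum_sem (r s p : ipartition) : Prop :=
  forall S B, exists y1 y2 tS y1B y2B tB T t R yR K J, forall w wB z,
    total_def r /\ total_def s /\ total_def p /\
    (stair_fails p S y1 y2 tS w \/
     (stair_fails s B y1B y2B tB wB \/ sum_at r S B T t R yR K J z)).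

Lemma sat_sum_formula e : sat e sum_formula <-> sum_sem (e 0) (e 1) (e 2).
Proof. by []. Qed.

Lemma sum_sem_complete r s p :
  [/\ is_total r, is_total s, is_total p & psize r + psize s = psize p] -> sum_sem r s p.
Proof.
move=> [total_r total_s total_p]; rewrite !psize_total //.
move: total_r total_s total_p => /is_total_row total_r /is_total_row total_s /is_total_row total_p.
move=> sum S B; have totals : total_def r /\ total_def s /\ total_def p.
  by split; [|split]; apply/total_defE.
case: (stair_fails_other S total_p) => [eq_S|[y1 [y2 [t fails]]]]; last first.
  by exists y1, y2, t, S, S, S, S, S, S, S, S, S => w wB z; have := fails w; tauto.
case: (stair_fails_other B total_s) => [eq_B|[y1 [y2 [t fails]]]]; last first.
  by exists S, S, S, y1, y2, t, S, S, S, S, S, S => w wB z; have := fails wB; tauto.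
have [T [t [R [yR [K [J gadget]]]]]] := sum_complete (row r 0) (row s 0).
exists S, S, S, S, S, S, T, t, R, yR, K, J => w wB z.
rewrite sum -(total_single total_r) -eq_S -eq_B in gadget.
by have := gadget z; tauto.
Qed.

Lemma sum_sem_sound r s p : sum_sem r s p ->
  [/\ is_total r, is_total s, is_total p & psize r + psize s = psize p].
Proof.
move=> sem; have [y1 [y2 [tS [y1B [y2B [tB [T [t [R [yR [K [J all]]]]]]]]]]]] :=
  sem (stair (row p 0)) (stair (row s 0)).
have [/total_defE total_r [/total_defE total_s [/total_defE total_p _]]] := all p p p.
have [w not_S] := stair_fails_stair y1 y2 tS total_p.
have [wB not_B] := stair_fails_stair y1B y2B tB total_s.
have gadget z : sum_at r (stair (row p 0)) (stair (row s 0)) T t R yR K J z.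
  by have [_ [_ [_ [/not_S []|[/not_B []|//]]]]] := all w wB z.
have [tr ts tp] : [/\ is_total r, is_total s & is_total p] by split; apply/is_total_row.
by split=> //; rewrite !psize_total //; apply: sum_sound total_r gadget.
Qed.

Theorem proposition3p10 :
  Pi_definable3 3 (fun rho sigma pi =>
    [/\ is_total rho, is_total sigma, is_total pi & psize rho + psize sigma = psize pi]).
Proof.
exists sum_formula; split; first exact: sum_formula_Pi3.
by move=> e; rewrite sat_sum_formula; split; [apply: sum_sem_complete | apply: sum_sem_sound].
Qed.
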